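(* Let $U$ be a harmonic function on a domain $\Omega\subset\mathbb{R}^n$ with no critical points. Let $\alpha:(-\delta,\delta)\to\Omega$ be an integral curve of the vector field $\nabla U/\|\nabla U\|$. Then for every $s\in(-\delta,\delta)$, \[ \|\nabla U(\alpha(s))\|=\|\nabla U(\alpha(0))\|\exp\left((n-1)\int_0^s H(\alpha(\xi))\,d\xi\right), \] where for $p\in\Omega$, $H(p)$ is the mean curvature at $p$ of the level hypersurface $\{U=U(p)\}$ oriented by the unit normal field $\mathbf{N}=\nabla U/\|\nabla U\|$.
   Context: Mean curvature convention: for a hypersurface $M$ oriented by unit normal $\mathbf{N}$, $p\in M$ and a unit tangent vector $\mathbf{v}\in T_pM$, the normal section $M\cap\Pi_{\mathbf{v}}$ (where $\Pi_{\mathbf{v}}$ is the plane through $p$ spanned by $\mathbf{v}$ and $\mathbf{N}(p)$) has signed curvature $\kappa_p(\mathbf{v})=\langle c''(0),\mathbf{N}(p)\rangle$ for its unit-speed parametrization $c$ with $c(0)=p$, $c'(0)=\mathbf{v}$ (for a level set of $f$ with $\mathbf{N}=\nabla f/\|\nabla f\|$ this equals $-D^2_{\mathbf{v}}f(p)/\|\nabla f(p)\|$). $H(p)$ is the average of $\kappa_p(\mathbf{v})$ over the unit sphere of $T_pM$ (equivalently, $\frac{1}{n-1}$ times the sum of principal curvatures). The curve $\alpha$ has unit speed. *)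

From HB Require Import structures.
From mathcomp Require Import all_boot all_order all_algebra.
From mathcomp Require Import all_classical all_reals all_analysis.
Set Implicit Arguments.
Unset Strict Implicit.
Unset Printing Implicit Defensive.
Import Order.TTheory GRing.Theory Num.Theory.
Import numFieldNormedType.Exports.
Local Open Scope classical_set_scope.
Local Open Scope ring_scope.

Section Defs.
Variables (R : realType) (n : nat).
Notation V := 'rV[R]_n.

(* Euclidean inner product and Euclidean norm on R^n
   (the library norm on 'rV is the max norm, hence these explicit ones). *)
Definition dotv (u v : V) : R := \sum_(i < n) u ord0 i * v ord0 i.
Definition enorm (v : V) : R := Num.sqrt (dotv v v).

Definition evec (i : 'I_n) : V := delta_mx ord0 i.

Definition partial (U : V -> R) (i : 'I_n) : V -> R :=
  fun x => 'D_(evec i) U x.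

Definition grad (U : V -> R) (x : V) : V := \row_(i < n) partial U i x.

Definition C2_on (Om : set V) (U : V -> R) : Prop :=
  (forall x, Om x -> differentiable U x) /\
  (forall i x, Om x -> differentiable (partial U i) x) /\
  (forall i j x, Om x -> {for x, continuous (partial (partial U i) j)}).

Definition laplacian (U : V -> R) (x : V) : R :=
  \sum_(i < n) partial (partial U i) i x.

Definition harmonic_on (Om : set V) (U : V -> R) : Prop :=
  C2_on Om U /\ forall x, Om x -> laplacian U x = 0.

Definition unit_normal (U : V -> R) (x : V) : V :=
  (enorm (grad U x))^-1 *: grad U x.

(* normal curvature of the level set {U = U p} (oriented by N) in direction v:
   kappa_p(v) = - D^2_v U(p) / |grad U(p)|  (convention fixed in the paper) *)
Definition normal_curvature (U : V -> R) (p v : V) : R :=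
  - ('D_v ('D_v U) p) / enorm (grad U p).

Definition tangent_onb (U : V -> R) (p : V) (e : 'I_n.-1 -> V) : Prop :=
  (forall i, dotv (e i) (grad U p) = 0) /\
  (forall i j, dotv (e i) (e j) = (i == j)%:R).

(* h is the mean curvature at p of the level hypersurface {U = U p}:
   1/(n-1) times the trace of the second fundamental form over T_pM,
   computed in any orthonormal basis of T_pM. *)
Definition is_mean_curvature (U : V -> R) (p : V) (h : R) : Prop :=
  forall e : 'I_n.-1 -> V, tangent_onb U p e ->
    h = (n.-1%:R)^-1 * \sum_(i < n.-1) normal_curvature U p (e i).

End Defs.

Definition oint (R : realType) (f : R -> R) (a b : R) : R :=
  if a <= b then \int[lebesgue_measure]_(x in `[a, b]) f x
  else - \int[lebesgue_measure]_(x in `[b, a]) f x.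

From HB Require Import structures.
From mathcomp Require Import all_boot all_order all_algebra.
From mathcomp Require Import all_classical all_reals all_analysis.
From mathcomp Require Import ring lra.
Set Implicit Arguments.
Unset Strict Implicit.
Import Order.TTheory GRing.Theory Num.Theory.
Import numFieldNormedType.Exports.
Local Open Scope classical_set_scope.
Local Open Scope ring_scope.

(** Along an integral curve [alpha] of [N = grad U / |grad U|], the chain rule gives
    [d/ds |grad U|^2 = 2 |grad U| D^2U(N, N)].  Completing [N] to an orthonormal basis
    of R^n (with a Householder reflection), the curvatures of the level set in the
    tangent directions add up to [-(tr D^2U - D^2U(N, N)) / |grad U|], so harmonicity
    gives [(n - 1) H = D^2U(N, N) / |grad U|].  Hence
    [d/ds ln |grad U(alpha s)| = (n - 1) H(alpha s)], and the formula follows from the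
    fundamental theorem of calculus, [H] being continuous because [U] is C^2. *)

Section EuclideanSpace.
Variables (R : realType) (n : nat).
Notation V := 'rV[R]_n.

Lemma dotvE (u v : V) : dotv u v = (u *m v^T) 0 0.
Proof. by rewrite /dotv mxE; apply: eq_bigr => i _; rewrite mxE. Qed.

Lemma dotvC (u v : V) : dotv u v = dotv v u.
Proof. by apply: eq_bigr => i _; rewrite mulrC. Qed.

Lemma dotvZr (c : R) (u v : V) : dotv u (c *: v) = c * dotv u v.
Proof. by rewrite /dotv mulr_sumr; apply: eq_bigr => i _; rewrite mxE mulrCA. Qed.

Lemma dotvBl (u v w : V) : dotv (u - v) w = dotv u w - dotv v w.
Proof. by rewrite /dotv -sumrB; apply: eq_bigr => i _; rewrite !mxE mulrBl. Qed.

Lemma dotvBr (u v w : V) : dotv u (v - w) = dotv u v - dotv u w.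
Proof. by rewrite dotvC dotvBl !(dotvC u). Qed.

Lemma dotv_ge0 (v : V) : 0 <= dotv v v.
Proof. by apply: sumr_ge0 => i _; rewrite -expr2 sqr_ge0. Qed.

Lemma dotv_eq0 (v : V) : (dotv v v == 0) = (v == 0).
Proof.
apply/idP/eqP => [/eqP|->]; last by rewrite /dotv big1 // => i _; rewrite mxE mul0r.
move=> /psumr_eq0P v0; apply/rowP => i; rewrite mxE.
by apply/eqP; rewrite -[_ == 0]orbb -mulf_eq0 v0 // => j _; rewrite -expr2 sqr_ge0.
Qed.

Lemma enorm_gt0 (v : V) : v != 0 -> 0 < enorm v.
Proof. by rewrite sqrtr_gt0 lt_def dotv_ge0 dotv_eq0 andbT. Qed.

Lemma sqr_enorm (v : V) : enorm v ^+ 2 = dotv v v.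
Proof. exact/sqr_sqrtr/dotv_ge0. Qed.

Lemma ln_enorm (v : V) : ln (enorm v) = 2^-1 * ln (dotv v v).
Proof.
have [v0|v0] := eqVneq v 0.
  have d0 : dotv v v = 0 by apply/eqP; rewrite dotv_eq0 v0.
  by rewrite /enorm d0 sqrtr0 ln0 // mulr0.
by rewrite -sqr_enorm lnXn ?enorm_gt0 // mulr2n; field.
Qed.

Lemma unit_normalE (U : V -> R) x : grad U x != 0 ->
  grad U x = enorm (grad U x) *: unit_normal U x.
Proof. by move=> g0; rewrite scalerA divff ?scale1r // gt_eqF ?enorm_gt0. Qed.

Lemma dotv_unit_normal (U : V -> R) x : grad U x != 0 ->
  dotv (unit_normal U x) (unit_normal U x) = 1.
Proof.
move=> g0; have gt0 := enorm_gt0 g0.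
rewrite /unit_normal dotvZr dotvC dotvZr -sqr_enorm.
by field; rewrite gt_eqF.
Qed.

Lemma dotv_row k (Q : 'M[R]_(k, n)) a b : dotv (row a Q) (row b Q) = (Q *m Q^T) a b.
Proof. by rewrite /dotv mxE; apply: eq_bigr => i _; rewrite !mxE. Qed.

Definition qform (A : 'M[R]_n) (v : V) : R := (v *m A *m v^T) 0 0.

Lemma qformE (A : 'M[R]_n) (v : V) :
  qform A v = \sum_(i < n) \sum_(j < n) v 0 i * v 0 j * A i j.
Proof.
rewrite /qform mxE exchange_big; apply: eq_bigr => j _.
rewrite mxE mulr_suml; apply: eq_bigr => i _.
by rewrite !mxE mulrAC.
Qed.

Lemma sum_qform_orthogonal (A Q : 'M[R]_n) : Q *m Q^T = 1%:M ->
  \sum_(a < n) qform A (row a Q) = \tr A.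
Proof.
move=> /mulmx1C QTQ; rewrite -[in RHS](mul1mx A) -QTQ -mulmxA mxtrace_mulC.
apply: eq_bigr => a _.
by rewrite /qform -row_mul tr_row !mxE; apply: eq_bigr => j _; rewrite !mxE.
Qed.

End EuclideanSpace.

Section Householder.
Variables (R : realType) (n : nat).
Notation V := 'rV[R]_n.

Definition householder (w : V) : 'M[R]_n := 1%:M - (2 / dotv w w) *: (w^T *m w).

Lemma householder_orthogonal (w : V) : w != 0 ->
  householder w *m (householder w)^T = 1%:M.
Proof.
move=> w0; have k0 : dotv w w != 0 by rewrite dotv_eq0.
have HT : (householder w)^T = householder w.
  by rewrite /householder linearB /= linearZ /= trmx1 trmx_mul trmxK.
have WW : (w^T *m w) *m (w^T *m w) = dotv w w *: (w^T *m w).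
  by rewrite mulmxA -(mulmxA w^T) [w *m w^T]mx11_scalar -dotvE mul_mx_scalar -scalemxAl.
rewrite HT /householder mulmxBl mul1mx mulmxBr mulmx1 -scalemxAl -scalemxAr WW !scalerA.
set c := 2 / dotv w w; have -> : c * c * dotv w w = c + c by rewrite /c; field.
by rewrite scalerDl opprB addrK subrK.
Qed.

Lemma mul_householder (v w : V) :
  v *m householder w = v - (2 * dotv v w / dotv w w) *: w.
Proof.
rewrite /householder mulmxBr mulmx1 -scalemxAr mulmxA [v *m w^T]mx11_scalar -dotvE.
by rewrite mul_scalar_mx scalerA mulrAC.
Qed.

End Householder.

Lemma exists_orthogonal_last_row (R : realType) (m : nat) (u : 'rV[R]_m.+1) :
  dotv u u = 1 -> exists Q : 'M[R]_m.+1, Q *m Q^T = 1%:M /\ row ord_max Q = u.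
Proof.
move=> u1; pose e : 'rV[R]_m.+1 := delta_mx 0 ord_max.
(* The reflection across the hyperplane orthogonal to [u - e] exchanges [e] and [u]. *)
have dote v : dotv v e = v 0 ord_max.
  by rewrite dotvC dotvE -rowE !mxE.
have [ue|une] := eqVneq u e.
  by exists 1%:M; rewrite trmx1 mulmx1 rowE mulmx1 ue.
pose w := u - e.
have w0 : w != 0 by rewrite subr_eq0.
have dotw : dotv w w = 2 - 2 * u 0 ord_max.
  by rewrite dotvBl !dotvBr !dote [dotv e u]dotvC dote u1 !mxE !eqxx /=; ring.
exists (householder w); split; first exact: householder_orthogonal.
rewrite rowE mul_householder -/e dotvBr dotvC !dote dotw !mxE !eqxx /=.
have -> : 2 * (u 0 ord_max - 1) / (2 - 2 * u 0 ord_max) = -1.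
  by field; rewrite -dotw dotv_eq0.
by rewrite scaleN1r opprK /w addrC subrK.
Qed.

Lemma is_derive1_continuous (R : realType) (W : normedModType R) (f : R -> W) (s : R) (df : W) :
  is_derive s 1 f df -> {for s, continuous f}.
Proof.
move=> dfs; apply/differentiable_continuous/derivable1_diffP.
exact: (@ex_derive _ _ _ _ _ _ _ dfs).
Qed.

Section Calculus.
Variables (R : realType) (n : nat).
Notation V := 'rV[R]_n.

Definition hessian (U : V -> R) (x : V) : 'M[R]_n :=
  \matrix_(i, j) partial (partial U i) j x.

Lemma laplacian_mxtrace (U : V -> R) x : laplacian U x = \tr (hessian U x).
Proof. by apply: eq_bigr => i _; rewrite mxE. Qed.

Lemma derive_dotv_grad (f : V -> R) x v : differentiable f x ->
  'D_v f x = dotv v (grad f x).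
Proof.
move=> df; rewrite deriveE // {1}(row_sum_delta v) linear_sum /=.
by apply: eq_bigr => i _; rewrite linearZ /= -deriveE // mxE.
Qed.

Lemma derive2_hessian (U : V -> R) x v :
  (\forall y \near x, differentiable U y) ->
  (forall i, differentiable (partial U i) x) ->
  'D_v ('D_v U) x = qform (hessian U x) v.
Proof.
move=> dU d2U; rewrite qformE.
rewrite (@near_eq_derive _ _ _ _ (\sum_(i < n) v 0 i \*: partial U i)); last first.
  near=> y; rewrite fct_sumE derive_dotv_grad; last by near: y.
  by apply: eq_bigr => i _; rewrite mxE.
rewrite derive_sum => [|i]; last exact/derivableZ/diff_derivable.
apply: eq_bigr => i _; rewrite deriveZ; last exact: diff_derivable.
rewrite derive_dotv_grad // /dotv -[_ *: _]/(_ * _) mulr_sumr.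
by apply: eq_bigr => j _; rewrite !mxE mulrA.
Unshelve. all: by end_near.
Qed.

Lemma is_derive_comp_grad (f : V -> R) (alpha : R -> V) (s : R) (N : V) :
  is_derive s 1 alpha N -> differentiable f (alpha s) ->
  is_derive s 1 (f \o alpha) (dotv N (grad f (alpha s))).
Proof.
move=> dalpha df.
have da : differentiable alpha s by apply/derivable1_diffP; exact: ex_derive.
have dfa : differentiable (f \o alpha) s by exact: differentiable_comp.
have := derivableP (@diff_derivable _ _ _ _ _ (1 : R) dfa).
rewrite deriveE // diff_comp // /= -deriveE // -derive_dotv_grad //.
by rewrite -deriveE // (@derive_val _ _ _ _ _ _ _ dalpha).
Qed.

Lemma is_derive_sqr_grad_curve (U : V -> R) (alpha : R -> V) (s : R) (N : V) :
  is_derive s 1 alpha N -> (forall i, differentiable (partial U i) (alpha s)) ->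
  is_derive s 1 (fun t => dotv (grad U (alpha t)) (grad U (alpha t)))
    (2 * (grad U (alpha s) *m hessian U (alpha s) *m N^T) 0 0).
Proof.
move=> dalpha d2U.
have -> : (fun t => dotv (grad U (alpha t)) (grad U (alpha t))) =
          \sum_(i < n) (partial U i \o alpha) * (partial U i \o alpha).
  by apply/funext => t; rewrite fct_sumE; apply: eq_bigr => i _; rewrite !mxE.
apply: is_derive_eq.
  apply: is_derive_sum => i.
  exact: is_deriveM (is_derive_comp_grad dalpha (d2U i)) (is_derive_comp_grad dalpha (d2U i)).
rewrite big_split /= -mulr2n mulr_natl; congr (_ *+ 2).
rewrite mxE; under [RHS]eq_bigr => i _ do rewrite mxE mulr_suml.
rewrite exchange_big /=; apply: eq_bigr => k _.
rewrite /dotv -[_ *: _]/(_ * _) mulr_sumr; apply: eq_bigr => i _.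
by rewrite !mxE /=; ring.
Qed.

End Calculus.

Lemma cvg_sum_fun (R : realType) (T : Type) (F : set_system T) (FF : Filter F)
  (I : Type) (r : seq I) (f : I -> T -> R) (l : I -> R) :
  (forall i, f i x @[x --> F] --> l i) ->
  \sum_(i <- r) f i x @[x --> F] --> \sum_(i <- r) l i.
Proof.
move=> fl; elim: r => [|i r IHr].
  by rewrite big_nil; under eq_fun do rewrite big_nil; exact: cvg_cst.
by rewrite big_cons; under eq_fun do rewrite big_cons; exact: cvgD.
Qed.

Lemma Rintegral_is_derive (R : realType) (f F : R -> R) (a b : R) : a <= b ->
  (forall x, a <= x <= b -> is_derive x 1 F (f x)) ->
  (forall x, a <= x <= b -> {for x, continuous f}) ->
  \int[lebesgue_measure]_(x in `[a, b]) f x = F b - F a.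
Proof.
rewrite le_eqVlt => /predU1P[<- _ _|ab dF cf].
  by rewrite set_itv1 Rintegral_set1 subrr.
have dF_oo x : a < x < b -> is_derive x 1 F (f x).
  by move=> /andP[ax xb]; apply: dF; rewrite !ltW.
have cF x : a <= x <= b -> {for x, continuous F} by move=> /dF /is_derive1_continuous.
rewrite /Rintegral (@continuous_FTC2 _ f F a b ab) -?EFinB //.
- apply: continuous_in_subspaceT => x; rewrite inE /= in_itv /=; exact: cf.
- split.
  + by move=> x; rewrite in_itv /= => /dF_oo dFx; exact: (@ex_derive _ _ _ _ _ _ _ dFx).
  + by apply: cvg_at_right_filter; apply: cF; rewrite lexx ltW.
  + by apply: cvg_at_left_filter; apply: cF; rewrite lexx ltW.
- by move=> x; rewrite in_itv /= => /dF_oo dFx; rewrite derive1E (@derive_val _ _ _ _ _ _ _ dFx).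
Qed.

Lemma oint_is_derive (R : realType) (f F : R -> R) (a b : R) :
  (forall x, Num.min a b <= x <= Num.max a b -> is_derive x 1 F (f x)) ->
  (forall x, Num.min a b <= x <= Num.max a b -> {for x, continuous f}) ->
  oint f a b = F b - F a.
Proof.
rewrite /oint; case: leP => [ab|/ltW ba].
  exact: Rintegral_is_derive.
by move=> dF cf; rewrite (Rintegral_is_derive ba dF cf) opprB.
Qed.

Lemma mean_curvature_harmonic (R : realType) (m : nat) (U : 'rV[R]_m.+1 -> R) p h :
  grad U p != 0 -> is_mean_curvature U p h ->
  (forall v, 'D_v ('D_v U) p = qform (hessian U p) v) ->
  \tr (hessian U p) = 0 ->
  h = m%:R^-1 * (qform (hessian U p) (unit_normal U p) / enorm (grad U p)).
Proof.
move=> g0 hH D2U trH.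
have [Q [QQ QN]] := exists_orthogonal_last_row (dotv_unit_normal g0).
set A := hessian U p; set N := unit_normal U p in QN *.
pose e (i : 'I_m) := row (widen_ord (leqnSn m) i) Q.
have e_tangent : tangent_onb U p e.
  split=> [i|i j]; last by rewrite dotv_row QQ mxE.
  rewrite (unit_normalE g0) dotvZr -/N -QN dotv_row QQ mxE.
  by rewrite -val_eqE /= ltn_eqF ?mulr0.
have sum_e : \sum_(i < m) qform A (e i) = - qform A N.
  have := sum_qform_orthogonal A QQ; rewrite big_ord_recr /= trH QN => sum0.
  by apply/eqP; rewrite -addr_eq0 sum0.
rewrite (hH e e_tangent) /normal_curvature.
under eq_bigr => i _ do rewrite D2U.
by rewrite -mulr_suml sumrN sum_e opprK.
Qed.

Section HarmonicLevelSets.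
Variables (R : realType) (m : nat) (Om : set 'rV[R]_m.+1) (U H : 'rV[R]_m.+1 -> R).
Hypotheses (Om_open : open Om) (U_harmonic : harmonic_on Om U)
  (gradU_neq0 : forall x, Om x -> grad U x != 0)
  (H_mean_curvature : forall p, Om p -> is_mean_curvature U p (H p)).

Let mean_curvature_formula x :=
  m%:R^-1 * (qform (hessian U x) (unit_normal U x) / enorm (grad U x)).

Lemma mean_curvatureE p : Om p -> H p = mean_curvature_formula p.
Proof.
move: U_harmonic => [[dU [d2U _]] lapU] Omp.
apply: mean_curvature_harmonic.
- exact: gradU_neq0.
- exact: H_mean_curvature.
- move=> v; apply: derive2_hessian => [|i]; last exact: d2U.
  by apply: filterS (Om_open Omp) => x; apply: dU.
- by rewrite -laplacian_mxtrace lapU.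
Qed.

Lemma continuous_mean_curvature p : Om p -> {for p, continuous H}.
Proof.
move: U_harmonic => [[_ [d2U cU]] _] Omp.
have cgrad i : {for p, continuous (fun x => grad U x 0 i)}.
  have -> : (fun x => grad U x 0 i) = partial U i by apply/funext => x; rewrite mxE.
  exact/differentiable_continuous/d2U.
have chess i j : {for p, continuous (fun x => hessian U x i j)}.
  have -> : (fun x => hessian U x i j) = partial (partial U i) j.
    by apply/funext => x; rewrite mxE.
  exact: cU.
have cg : {for p, continuous (fun x => enorm (grad U x))}.
  apply: continuous_comp (@sqrt_continuous R _).
  apply: (@cvg_sum_fun _ _ (nbhs p)) => i.
  exact: cvgM (cgrad i) (cgrad i).
have g0 := enorm_gt0 (gradU_neq0 Omp).
have cN i : {for p, continuous (fun x => unit_normal U x 0 i)}.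
  have -> : (fun x => unit_normal U x 0 i) =
            (fun x => (enorm (grad U x))^-1 * grad U x 0 i).
    by apply/funext => x; rewrite mxE.
  exact: cvgM (cvgV (lt0r_neq0 g0) cg) (cgrad i).
have cQ : {for p, continuous (fun x =>
    \sum_i \sum_j unit_normal U x 0 i * unit_normal U x 0 j * hessian U x i j)}.
  apply: (@cvg_sum_fun _ _ (nbhs p)) => i; apply: (@cvg_sum_fun _ _ (nbhs p)) => j.
  exact: cvgM (cvgM (cN i) (cN j)) (chess i j).
have cK : {for p, continuous mean_curvature_formula}.
  have -> : mean_curvature_formula = fun x => m%:R^-1 *
      ((\sum_i \sum_j unit_normal U x 0 i * unit_normal U x 0 j * hessian U x i j) /
       enorm (grad U x)).
    by apply/funext => x; rewrite /mean_curvature_formula qformE.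
  exact: cvgMl_tmp (cvgM cQ (cvgV (lt0r_neq0 g0) cg)).
have HK : \forall x \near p, mean_curvature_formula x = H x.
  by apply: filterS (Om_open Omp) => x /mean_curvatureE ->.
rewrite /prop_for /continuous_at (mean_curvatureE Omp).
exact: cvg_trans (near_eq_cvg HK) cK.
Qed.

Lemma is_derive_ln_enorm_grad (alpha : R -> 'rV[R]_m.+1) s : (0 < m)%N ->
  Om (alpha s) -> is_derive s 1 alpha (unit_normal U (alpha s)) ->
  is_derive s 1 (fun t => ln (enorm (grad U (alpha t)))) (m%:R * H (alpha s)).
Proof.
move=> m_gt0 Omx dalpha; move: U_harmonic => [[_ [d2U _]] _].
have gx0 := gradU_neq0 Omx; have g_gt0 := enorm_gt0 gx0.
have sqr_gt0 : 0 < dotv (grad U (alpha s)) (grad U (alpha s)).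
  by rewrite -sqr_enorm exprn_gt0.
have -> : (fun t => ln (enorm (grad U (alpha t)))) =
          2^-1 \*: (@ln R \o (fun t => dotv (grad U (alpha t)) (grad U (alpha t)))).
  by apply/funext => t; rewrite ln_enorm.
apply: is_derive_eq.
  apply/is_deriveZ/is_derive1_comp; first exact: is_derive1_ln.
  exact: is_derive_sqr_grad_curve dalpha (fun i => d2U i _ Omx).
have GAN : (grad U (alpha s) *m hessian U (alpha s) *m (unit_normal U (alpha s))^T) 0 0
    = enorm (grad U (alpha s)) * qform (hessian U (alpha s)) (unit_normal U (alpha s)).
  by rewrite {1}(unit_normalE gx0) -2!scalemxAl [in LHS]mxE.
rewrite GAN (mean_curvatureE Omx) /mean_curvature_formula -sqr_enorm -[_ *: _]/(_ * _).
by field; rewrite lt0r_neq0 ?pnatr_eq0 -?lt0n.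
Qed.

End HarmonicLevelSets.

Theorem theorem2 (R : realType) (n : nat) (Om : set 'rV[R]_n) (U : 'rV[R]_n -> R)
  (H : 'rV[R]_n -> R) (alpha : R -> 'rV[R]_n) (delta : R) :
  (1 < n)%N ->
  open Om -> connected Om -> Om !=set0 ->
  harmonic_on Om U ->
  (forall x, Om x -> grad U x != 0) ->
  (forall p, Om p -> is_mean_curvature U p (H p)) ->
  0 < delta ->
  (forall s, - delta < s < delta ->
     Om (alpha s) /\ is_derive s 1 alpha (unit_normal U (alpha s))) ->
  forall s, - delta < s < delta ->
    enorm (grad U (alpha s)) =
    enorm (grad U (alpha 0)) * expR (n.-1%:R * oint (fun xi => H (alpha xi)) 0 s).
Proof.
case: n Om U H alpha => [|[|m]] // Om U H alpha _ Om_open _ _ U_harmonic gradU_neq0 H_mean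
  delta_gt0 alpha_normal s s_delta /=.
pose g t := enorm (grad U (alpha t)).
have g_gt0 t : - delta < t < delta -> 0 < g t.
  by move=> /alpha_normal[Om_t _]; exact/enorm_gt0/gradU_neq0.
have segment_delta x : Num.min 0 s <= x <= Num.max 0 s -> - delta < x < delta.
  move: s_delta; rewrite ge_min le_max => /andP[? ?] /andP[/orP[?|?] /orP[?|?]];
  by apply/andP; split; lra.
pose F := (m.+1%:R)^-1 \*: (@ln R \o g).
have dF x : - delta < x < delta -> is_derive x 1 F (H (alpha x)).
  move=> /alpha_normal[Om_x dx]; apply: is_derive_eq.
    exact/is_deriveZ/(is_derive_ln_enorm_grad Om_open U_harmonic gradU_neq0 H_mean).
  by rewrite -[_ *: _]/(_ * _) mulKf ?pnatr_eq0.
have cH x : - delta < x < delta -> {for x, continuous (H \o alpha)}.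
  move=> /alpha_normal[Om_x /is_derive1_continuous dx]; apply: continuous_comp dx _.
  exact: (continuous_mean_curvature Om_open U_harmonic gradU_neq0 H_mean).
have -> : oint (fun xi => H (alpha xi)) 0 s = (m.+1%:R)^-1 * (ln (g s) - ln (g 0)).
  rewrite (oint_is_derive (fun x hx => dF x (segment_delta x hx))
                          (fun x hx => cH x (segment_delta x hx))).
  by rewrite -mulrBr.
have delta0 : - delta < 0 < delta by rewrite oppr_lt0 delta_gt0.
rewrite mulVKf ?pnatr_eq0 // expRB !lnK ?posrE ?g_gt0 // -/(g s) -/(g 0).
by field; rewrite lt0r_neq0 ?g_gt0.
Qed.
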